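(* Let $F$ be a Boolean formula over $n$ variables and let $1 \le m \le n$. If $\varphi_{stock}^F(m)$ is true, then $|\mathrm{Sol}(F)| \le m \cdot 2^m$.
   Context: $\mathrm{Sol}(F)\subseteq\{0,1\}^n$ denotes the set of satisfying assignments of $F$. For $n,m,k\ge 1$, $\mathcal{H}(n,m,k)$ denotes a fixed explicit $k$-wise independent family of hash functions $\{0,1\}^n\to\{0,1\}^m$: for $h$ drawn uniformly from $\mathcal{H}(n,m,k)$, all distinct $y_1,\dots,y_k\in\{0,1\}^n$ and all $\alpha_1,\dots,\alpha_k\in\{0,1\}^m$, $\Pr[h(y_1)=\alpha_1\wedge\cdots\wedge h(y_k)=\alpha_k]=2^{-mk}$. The statement $\varphi_{stock}^F(m)$ means: there exist $h_1,\dots,h_m\in\mathcal{H}(n,m,2)$ such that for every $z_1\in\mathrm{Sol}(F)$ there is an index $i\in\{1,\dots,m\}$ such that no $z_2\in\mathrm{Sol}(F)$ with $z_2\neq z_1$ satisfies $h_i(z_2)=h_i(z_1)$ (i.e. every solution is the only solution in its cell under some $h_i$). *)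

From mathcomp Require Import all_boot.
Set Implicit Arguments. Unset Strict Implicit. Unset Printing Implicit Defensive.

Definition bv (n : nat) := {ffun 'I_n -> bool}.

Inductive formula (n : nat) : Type :=
| FTrue : formula n
| FFalse : formula n
| FVar : 'I_n -> formula n
| FNot : formula n -> formula n
| FAnd : formula n -> formula n -> formula n
| FOr : formula n -> formula n -> formula n.

Fixpoint eval_formula n (F : formula n) (a : bv n) : bool :=
  match F with
  | FTrue => true
  | FFalse => false
  | FVar i => a i
  | FNot G => ~~ eval_formula G a
  | FAnd G H => eval_formula G a && eval_formula H a
  | FOr G H => eval_formula G a || eval_formula H a
  end.

Definition Sol n (F : formula n) : {set bv n} := [set a | eval_formula F a].

(* A hash family {0,1}^n -> {0,1}^m is a nonempty finite list (multiset) of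
   functions, sampled uniformly. It is k-wise independent if for all distinct
   y_1..y_k and all alpha_1..alpha_k, Pr[h(y_j)=alpha_j for all j] = 2^{-mk},
   i.e. #{h in H | ...} * 2^(m*k) = |H|. *)
Definition kwise_independent n m k (H : seq {ffun bv n -> bv m}) : Prop :=
  (0 < size H) /\
  forall (ys : k.-tuple (bv n)) (alphas : k.-tuple (bv m)),
    uniq ys ->
    count (fun h : {ffun bv n -> bv m} =>
             [forall j : 'I_k, h (tnth ys j) == tnth alphas j]) H * 2 ^ (m * k)
    = size H.

Definition phi_stock n m (H : seq {ffun bv n -> bv m}) (F : formula n) : Prop :=
  exists hs : m.-tuple {ffun bv n -> bv m},
    (forall i : 'I_m, tnth hs i \in H) /\
    forall z1, z1 \in Sol F ->
      exists i : 'I_m, forall z2, z2 \in Sol F -> z2 != z1 ->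
        tnth hs i z2 != tnth hs i z1.

(** Send each solution z to the pair (i, h_i z), where h_i is a hash function
    that isolates z among the solutions. Two solutions with the same image share
    the index i and the cell under h_i, so they coincide since h_i isolates
    them. Hence Sol F injects into 'I_m * {0,1}^m. *)
From mathcomp Require Import all_boot.

Section Isolation.

Variables (T U : finType).

Definition isolates (f : T -> U) (A : {pred T}) (x : T) : bool :=
  [forall y in A, (y != x) ==> (f y != f x)].

Lemma isolatesP (f : T -> U) (A : {pred T}) (x : T) :
  reflect {in A, forall y, y != x -> f y != f x} (isolates f A x).
Proof.
by apply: (iffP forall_inP) => isoA y Ay; apply/implyP/isoA.
Qed.

Lemma card_le_isolating_family (I : finType) (f : I -> T -> U) (A : {set T}) :
  {in A, forall x, exists i, isolates (f i) A x} -> #|A| <= #|I| * #|U|.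
Proof.
move=> isoA; have [-> | [x0 Ax0]] := set_0Vmem A; first by rewrite cards0.
have [i0 _] := isoA x0 Ax0.
pose idx x := odflt i0 [pick i | isolates (f i) A x].
have idx_isolates x : x \in A -> isolates (f (idx x)) A x.
  move=> Ax; rewrite /idx; case: pickP => [i //|none].
  by have [i] := isoA x Ax; rewrite none.
rewrite -card_prod; apply: (@leq_card_in _ _ (fun x => (idx x, f (idx x) x))).
move=> x y Ax Ay [eq_idx eq_f]; apply/eqP; apply: contraT => neq_xy.
have /isolatesP/(_ y Ay) := idx_isolates x Ax.
by rewrite eq_sym neq_xy eq_f -eq_idx eqxx => /(_ isT).
Qed.

End Isolation.

Lemma card_bv (n : nat) : #|bv n| = 2 ^ n.
Proof. by rewrite card_ffun card_bool card_ord. Qed.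

Theorem claim3p1 (n m : nat) (H : seq {ffun bv n -> bv m}) (F : formula n) :
  kwise_independent 2 H -> 1 <= m <= n -> phi_stock H F ->
  #|Sol F| <= m * 2 ^ m.
Proof.
move=> _ _ [hs [_ isolating]].
rewrite -[m in m * _]card_ord -card_bv.
apply: (@card_le_isolating_family _ _ _ (fun i => tnth hs i)) => z Fz.
by have [i iso_z] := isolating z Fz; exists i; apply/isolatesP.
Qed.
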